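(* For every countable subset $\Sigma \subseteq \mathbb{C}$ and every dense subset $T \subseteq \mathbb{C}$ there is a transcendental entire function $f$ such that $f^{(s)}(\Sigma) \subseteq T$ for all integers $s \geq 0$.
   Context: A transcendental entire function is an entire function $\mathbb{C}\to\mathbb{C}$ that is not a polynomial. $f^{(s)}$ denotes the $s$-th derivative of $f$, with $f^{(0)}=f$. *)

From Stdlib Require Import Reals.
Open Scope R_scope.

Record Cplx : Type := mkC { Re : R ; Im : R }.

Definition C0 : Cplx := mkC 0 0.
Definition C1 : Cplx := mkC 1 0.
Definition Cadd (z w : Cplx) : Cplx := mkC (Re z + Re w) (Im z + Im w).
Definition Copp (z : Cplx) : Cplx := mkC (- Re z) (- Im z).
Definition Csub (z w : Cplx) : Cplx := Cadd z (Copp w).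
Definition Cmul (z w : Cplx) : Cplx :=
  mkC (Re z * Re w - Im z * Im w) (Re z * Im w + Im z * Re w).
Definition Cnorm (z : Cplx) : R := sqrt (Re z * Re z + Im z * Im z).

Fixpoint Cpow (z : Cplx) (n : nat) : Cplx :=
  match n with O => C1 | S m => Cmul z (Cpow z m) end.

Fixpoint Csum (a : nat -> Cplx) (n : nat) : Cplx :=
  match n with O => a O | S m => Cadd (Csum a m) (a (S m)) end.

Definition C_has_derivative (f : Cplx -> Cplx) (z l : Cplx) : Prop :=
  forall eps : R, 0 < eps -> exists delta : R, 0 < delta /\
    forall h : Cplx, Cnorm h < delta ->
      Cnorm (Csub (Csub (f (Cadd z h)) (f z)) (Cmul l h)) <= eps * Cnorm h.

Definition entire (f : Cplx -> Cplx) : Prop :=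
  forall z, exists l, C_has_derivative f z l.

Definition is_polynomial (f : Cplx -> Cplx) : Prop :=
  exists (n : nat) (a : nat -> Cplx), forall z, f z = Csum (fun k => Cmul (a k) (Cpow z k)) n.

Definition transcendental_entire (f : Cplx -> Cplx) : Prop :=
  entire f /\ ~ is_polynomial f.

(* D s is the s-th complex derivative of f (D 0 = f). For entire f such a tower
   exists and is unique. *)
Definition derivative_tower (f : Cplx -> Cplx) (D : nat -> Cplx -> Cplx) : Prop :=
  D O = f /\ forall (s : nat) (z : Cplx), C_has_derivative (D s) z (D (S s) z).

Definition countable_set (S : Cplx -> Prop) : Prop :=
  exists e : nat -> Cplx, forall z, S z -> exists n, e n = z.

Definition dense_set (T : Cplx -> Prop) : Prop :=
  forall (z : Cplx) (eps : R), 0 < eps -> exists t, T t /\ Cnorm (Csub t z) < eps.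

(* Enumerate Σ ∪ {0} as p_0 = 0, p_1, p_2, … and all interpolation conditions
   "f^(s)(p_n) ∈ T ∖ {0}" as a sequence k ↦ (s_k, n_k) in which, for a fixed n,
   the orders s appear in increasing order.  Condition k is served by the
   polynomial  Q_k = (z - p_k)^{s_k} ∏ (z - p_j)^{s_j + 1}, the product ranging
   over earlier conditions j < k at points p_j ≠ p_k, so that Q_k^(s_j)(p_j) = 0
   for all earlier j while Q_k^(s_k)(p_k) ≠ 0.  We put f = Σ c_k Q_k, choosing c_k
   inductively: the s_k-th derivative of the partial sum at p_k is moved into
   T ∖ {0} (T is dense), and |c_k| is so small that c_k Q_k^(i) is at most 2^{-k}
   on the disc of radius k for all i ≤ k.  Conditions at a point already listed
   under a smaller index get c_k = 0.  All derivative series then converge, may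
   be differentiated term by term, later terms do not disturb earlier conditions,
   and f^(N+1)(0) ≠ 0 for every N shows that f is not a polynomial. *)

From Pilot Require Import Defs.
From Stdlib Require Import Reals Lra Lia Psatz List Arith Factorial Classical ClassicalEpsilon.
Import ListNotations.
(* Re-import so that C0, C1 refer to the complex constants, not to Stdlib's Reals. *)
Import Defs.
Open Scope R_scope.


Lemma Cext : forall z w, Re z = Re w -> Im z = Im w -> z = w.
Proof. intros [a b] [c d]; simpl; intros; subst; reflexivity. Qed.

Ltac Cring := intros; apply Cext; unfold Csub, Cadd, Copp, Cmul, C0, C1; simpl; ring.

Lemma Cnorm_nonneg : forall z, 0 <= Cnorm z.
Proof. intros; unfold Cnorm; apply sqrt_pos. Qed.

Lemma Cnorm_sq : forall z, Cnorm z * Cnorm z = Re z * Re z + Im z * Im z.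
Proof. intros; unfold Cnorm; apply sqrt_sqrt; nra. Qed.

Lemma Cnorm_mul : forall z w, Cnorm (Cmul z w) = Cnorm z * Cnorm w.
Proof.
  intros [a b] [c d]; unfold Cnorm, Cmul; simpl.
  rewrite <- sqrt_mult_alt by nra. f_equal. ring.
Qed.

(* The triangle inequality, from Cauchy–Schwarz  ac + bd ≤ |z| |w|. *)
Lemma Cnorm_triangle : forall z w, Cnorm (Cadd z w) <= Cnorm z + Cnorm w.
Proof.
  intros z w.
  pose proof (Cnorm_sq z) as Hz. pose proof (Cnorm_sq w) as Hw.
  pose proof (Cnorm_sq (Cadd z w)) as Hzw.
  pose proof (Cnorm_nonneg z). pose proof (Cnorm_nonneg w). pose proof (Cnorm_nonneg (Cadd z w)).
  remember (Cnorm (Cadd z w)) as x. remember (Cnorm z) as u. remember (Cnorm w) as v.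
  destruct z as [a b]; destruct w as [c d]; unfold Cadd in *; simpl in *.
  assert (Hcs : a * c + b * d <= u * v).
  { apply Rsqr_incr_0_var; unfold Rsqr; [|nra].
    replace (u * v * (u * v)) with (u * u * (v * v)) by ring. rewrite Hz, Hw.
    pose proof (Rle_0_sqr (a * d - b * c)); unfold Rsqr in *; nra. }
  nra.
Qed.

Lemma Cnorm_Re : forall z, Rabs (Re z) <= Cnorm z.
Proof.
  intros z. pose proof (Cnorm_sq z). pose proof (Cnorm_nonneg z).
  apply Rsqr_incr_0_var; [| auto]. rewrite <- Rsqr_abs. unfold Rsqr. nra.
Qed.

Lemma Cnorm_Im : forall z, Rabs (Im z) <= Cnorm z.
Proof.
  intros z. pose proof (Cnorm_sq z). pose proof (Cnorm_nonneg z).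
  apply Rsqr_incr_0_var; [| auto]. rewrite <- Rsqr_abs. unfold Rsqr. nra.
Qed.

Lemma Cnorm_le_sum : forall z, Cnorm z <= Rabs (Re z) + Rabs (Im z).
Proof.
  intros z. pose proof (Cnorm_sq z) as Hz. pose proof (Cnorm_nonneg z).
  pose proof (Rabs_pos (Re z)); pose proof (Rabs_pos (Im z)).
  apply Rsqr_incr_0_var; [| lra]. unfold Rsqr. rewrite Hz.
  pose proof (Rsqr_abs (Re z)); pose proof (Rsqr_abs (Im z)). unfold Rsqr in *. nra.
Qed.

Lemma Cnorm_real : forall x, Cnorm (mkC x 0) = Rabs x.
Proof. intros; unfold Cnorm; simpl. replace (x * x + 0 * 0) with (x * x) by ring. apply sqrt_Rsqr_abs. Qed.

Lemma Cnorm_C0 : Cnorm C0 = 0.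
Proof. unfold C0; rewrite Cnorm_real; apply Rabs_R0. Qed.

Lemma Cnorm_pos : forall z, z <> C0 -> 0 < Cnorm z.
Proof.
  intros z Hz. destruct (Cnorm_nonneg z) as [|H0]; auto.
  exfalso; apply Hz. pose proof (Cnorm_sq z) as Hsq. rewrite <- H0 in Hsq.
  apply Cext; unfold C0; simpl; nra.
Qed.

Lemma Cnorm_opp : forall z, Cnorm (Copp z) = Cnorm z.
Proof. intros [a b]; unfold Cnorm, Copp; simpl; f_equal; ring. Qed.

Lemma Cnorm_sub_le : forall z w, Cnorm (Csub z w) <= Cnorm z + Cnorm w.
Proof. intros; unfold Csub; rewrite <- (Cnorm_opp w); apply Cnorm_triangle. Qed.

Lemma Cmul_nonzero : forall z w, z <> C0 -> w <> C0 -> Cmul z w <> C0.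
Proof.
  intros z w Hz Hw H. pose proof (Cnorm_pos _ Hz); pose proof (Cnorm_pos _ Hw).
  assert (Cnorm (Cmul z w) = 0) by (rewrite H; apply Cnorm_C0).
  rewrite Cnorm_mul in *. nra.
Qed.

Lemma Csub_nonzero : forall z w, z <> w -> Csub z w <> C0.
Proof.
  intros z w H H1. apply H. replace z with (Cadd (Csub z w) w) by Cring. rewrite H1. Cring.
Qed.

Definition Cinv (q : Cplx) : Cplx :=
  mkC (Re q / (Re q * Re q + Im q * Im q)) (- Im q / (Re q * Re q + Im q * Im q)).

Lemma Cinv_l : forall q, q <> C0 -> Cmul (Cinv q) q = C1.
Proof.
  intros q H. pose proof (Cnorm_pos _ H). pose proof (Cnorm_sq q).
  assert (Re q * Re q + Im q * Im q <> 0) by nra.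
  destruct q as [a b]; simpl in *; apply Cext; unfold Cmul, Cinv, C1; simpl; field; auto.
Qed.

Definition INRc (n : nat) : Cplx := mkC (INR n) 0.

Lemma INRc_nonzero : forall n, (0 < n)%nat -> INRc n <> C0.
Proof.
  intros n Hn H. assert (Hre : Re (INRc n) = Re C0) by (rewrite H; auto).
  unfold INRc, C0 in Hre; simpl in Hre. apply lt_0_INR in Hn. lra.
Qed.

(** * Complex derivatives *)

Lemma has_derivative_of_quadratic_remainder : forall f z l M, 0 <= M ->
  (forall h, Cnorm h <= 1 ->
     Cnorm (Csub (Csub (f (Cadd z h)) (f z)) (Cmul l h)) <= Cnorm h * Cnorm h * M) ->
  C_has_derivative f z l.
Proof.
  intros f z l M HM Hrem eps Heps. exists (Rmin 1 (eps / (M + 1))). split.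
  { apply Rmin_pos; [lra|]. apply Rdiv_lt_0_compat; lra. }
  intros h Hh. pose proof (Rmin_l 1 (eps / (M + 1))). pose proof (Rmin_r 1 (eps / (M + 1))).
  pose proof (Cnorm_nonneg h). pose proof (Hrem h ltac:(lra)).
  assert (Hsmall : Cnorm h * (M + 1) <= eps).
  { assert (Cnorm h <= eps / (M + 1)) as Hle by lra.
    apply (Rmult_le_compat_r (M + 1)) in Hle; [|lra].
    unfold Rdiv in Hle. rewrite Rmult_assoc, Rinv_l in Hle; lra. }
  nra.
Qed.

(* Derivatives are unique: test the two estimates on a small real increment. *)
Lemma derivative_unique : forall f z l1 l2,
  C_has_derivative f z l1 -> C_has_derivative f z l2 -> l1 = l2.
Proof.
  intros f z l1 l2 H1 H2. apply NNPP; intro Hne.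
  assert (Hpos : 0 < Cnorm (Csub l1 l2)) by (apply Cnorm_pos, Csub_nonzero; auto).
  set (eps := Cnorm (Csub l1 l2) / 4).
  destruct (H1 eps ltac:(unfold eps; lra)) as [d1 [Hd1 P1]].
  destruct (H2 eps ltac:(unfold eps; lra)) as [d2 [Hd2 P2]].
  set (t := Rmin d1 d2 / 2).
  assert (Ht : 0 < t) by (unfold t; pose proof (Rmin_pos d1 d2 Hd1 Hd2); lra).
  set (h := mkC t 0).
  assert (Hh : Cnorm h = t) by (unfold h; rewrite Cnorm_real; apply Rabs_right; lra).
  assert (t < d1) by (unfold t; pose proof (Rmin_l d1 d2); lra).
  assert (t < d2) by (unfold t; pose proof (Rmin_r d1 d2); lra).
  specialize (P1 h ltac:(lra)). specialize (P2 h ltac:(lra)).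
  set (X := Csub (f (Cadd z h)) (f z)) in *.
  pose proof (Cnorm_sub_le (Csub X (Cmul l2 h)) (Csub X (Cmul l1 h))) as Htri.
  assert (Hdiff : Cnorm (Cmul (Csub l1 l2) h) = Cnorm (Csub l1 l2) * t)
    by (rewrite Cnorm_mul, Hh; auto).
  replace (Cmul (Csub l1 l2) h) with (Csub (Csub X (Cmul l2 h)) (Csub X (Cmul l1 h))) in Hdiff
    by Cring.
  rewrite Hh in P1, P2. unfold eps in *. nra.
Qed.

Lemma has_derivative_ext : forall f g z l, (forall w, f w = g w) ->
  C_has_derivative f z l -> C_has_derivative g z l.
Proof.
  intros f g z l Hfg H eps He. destruct (H eps He) as [d [Hd P]]. exists d; split; auto.
  intros h Hh. rewrite <- !Hfg. auto.
Qed.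

(** * Polynomials as coefficient lists (constant term first) *)

Fixpoint peval (l : list Cplx) (z : Cplx) : Cplx :=
  match l with [] => C0 | a :: l' => Cadd a (Cmul z (peval l' z)) end.

Fixpoint padd (a b : list Cplx) : list Cplx :=
  match a, b with
  | [], _ => b
  | _, [] => a
  | x :: a', y :: b' => Cadd x y :: padd a' b'
  end.

Definition pscale (c : Cplx) (l : list Cplx) : list Cplx := map (Cmul c) l.

(* Formal derivative:  (a + z l)' = l + z l'. *)
Fixpoint pderiv (l : list Cplx) : list Cplx :=
  match l with [] => [] | _ :: l' => padd l' (C0 :: pderiv l') end.

Fixpoint pderivn (s : nat) (l : list Cplx) : list Cplx :=
  match s with O => l | S s => pderiv (pderivn s l) end.

Definition pmul_lin (p : Cplx) (l : list Cplx) : list Cplx := padd (C0 :: l) (pscale (Copp p) l).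

Fixpoint pmul_lin_pow (p : Cplx) (m : nat) (l : list Cplx) : list Cplx :=
  match m with O => l | S m => pmul_lin p (pmul_lin_pow p m l) end.

(* The majorant Σ |a_i| x^i, which bounds |l(z)| for |z| ≤ x. *)
Fixpoint pmajor (l : list Cplx) (x : R) : R :=
  match l with [] => 0 | a :: l' => Cnorm a + x * pmajor l' x end.

Lemma peval_add : forall a b z, peval (padd a b) z = Cadd (peval a z) (peval b z).
Proof. induction a as [|x a IH]; intros [|y b] z; simpl; try Cring. rewrite IH. Cring. Qed.

Lemma peval_scale : forall c a z, peval (pscale c a) z = Cmul c (peval a z).
Proof. induction a as [|x a IH]; intros z; simpl; [Cring|]. rewrite IH. Cring. Qed.

Lemma peval_mul_lin : forall p l z, peval (pmul_lin p l) z = Cmul (Csub z p) (peval l z).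
Proof. intros; unfold pmul_lin; rewrite peval_add, peval_scale; simpl. Cring. Qed.

Lemma peval_pderiv_cons : forall a l z,
  peval (pderiv (a :: l)) z = Cadd (peval l z) (Cmul z (peval (pderiv l) z)).
Proof. intros; simpl pderiv; rewrite peval_add; simpl. Cring. Qed.

Lemma peval_pderiv_add : forall a b z,
  peval (pderiv (padd a b)) z = Cadd (peval (pderiv a) z) (peval (pderiv b) z).
Proof.
  induction a as [|x a IH]; intros [|y b] z; simpl padd; try (simpl; Cring).
  rewrite !peval_pderiv_cons, IH, peval_add. Cring.
Qed.

Lemma peval_pderiv_scale : forall c a z,
  peval (pderiv (pscale c a)) z = Cmul c (peval (pderiv a) z).
Proof.
  induction a as [|x a IH]; intros z; [simpl; Cring|].
  change (pscale c (x :: a)) with (Cmul c x :: pscale c a).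
  rewrite !peval_pderiv_cons, IH, peval_scale. Cring.
Qed.

Lemma peval_pderiv_mul_lin : forall p l z,
  peval (pderiv (pmul_lin p l)) z = Cadd (peval l z) (Cmul (Csub z p) (peval (pderiv l) z)).
Proof.
  intros; unfold pmul_lin. rewrite peval_pderiv_add, peval_pderiv_cons, peval_pderiv_scale.
  simpl. Cring.
Qed.

Lemma pmajor_nonneg : forall l x, 0 <= x -> 0 <= pmajor l x.
Proof.
  induction l as [|a l IH]; intros x Hx; simpl; [lra|].
  pose proof (Cnorm_nonneg a). pose proof (IH x Hx). nra.
Qed.

Lemma pmajor_mono : forall l x y, 0 <= x -> x <= y -> pmajor l x <= pmajor l y.
Proof.
  induction l as [|a l IH]; intros x y Hx Hxy; simpl; [lra|].
  pose proof (IH x y Hx Hxy). pose proof (pmajor_nonneg l x Hx). nra.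
Qed.

Lemma peval_bound : forall l w, Cnorm (peval l w) <= pmajor l (Cnorm w).
Proof.
  induction l as [|a l IH]; intros w; simpl.
  - rewrite Cnorm_C0; lra.
  - eapply Rle_trans; [apply Cnorm_triangle|]. rewrite Cnorm_mul.
    pose proof (IH w). pose proof (Cnorm_nonneg w). nra.
Qed.

Lemma peval_diff_bound : forall l z h, Cnorm h <= 1 ->
  Cnorm (Csub (peval l (Cadd z h)) (peval l z)) <= Cnorm h * pmajor l (Cnorm z + 1).
Proof.
  induction l as [|a l IH]; intros z h Hh.
  - simpl. replace (Csub C0 C0) with C0 by Cring. rewrite Cnorm_C0. lra.
  - simpl peval. simpl pmajor.
    replace (Csub (Cadd a (Cmul (Cadd z h) (peval l (Cadd z h)))) (Cadd a (Cmul z (peval l z))))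
      with (Cadd (Cmul z (Csub (peval l (Cadd z h)) (peval l z))) (Cmul h (peval l (Cadd z h))))
      by Cring.
    eapply Rle_trans; [apply Cnorm_triangle|]. rewrite !Cnorm_mul.
    pose proof (IH z h Hh). pose proof (peval_bound l (Cadd z h)).
    pose proof (Cnorm_triangle z h). pose proof (Cnorm_nonneg z). pose proof (Cnorm_nonneg h).
    pose proof (pmajor_mono l (Cnorm (Cadd z h)) (Cnorm z + 1) (Cnorm_nonneg _) ltac:(lra)).
    pose proof (pmajor_nonneg l (Cnorm z + 1) ltac:(lra)). pose proof (Cnorm_nonneg a).
    nra.
Qed.

Lemma peval_remainder_bound : forall l z h, Cnorm h <= 1 ->
  Cnorm (Csub (Csub (peval l (Cadd z h)) (peval l z)) (Cmul (peval (pderiv l) z) h))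
    <= Cnorm h * Cnorm h * pmajor l (Cnorm z + 1).
Proof.
  induction l as [|a l IH]; intros z h Hh.
  - simpl. replace (Csub (Csub C0 C0) (Cmul C0 h)) with C0 by Cring. rewrite Cnorm_C0.
    pose proof (Cnorm_nonneg h). nra.
  - rewrite peval_pderiv_cons. simpl peval. simpl pmajor.
    replace (Csub (Csub (Cadd a (Cmul (Cadd z h) (peval l (Cadd z h))))
                        (Cadd a (Cmul z (peval l z))))
                  (Cmul (Cadd (peval l z) (Cmul z (peval (pderiv l) z))) h))
      with (Cadd (Cmul z (Csub (Csub (peval l (Cadd z h)) (peval l z))
                               (Cmul (peval (pderiv l) z) h)))
                 (Cmul h (Csub (peval l (Cadd z h)) (peval l z)))) by Cring.
    eapply Rle_trans; [apply Cnorm_triangle|]. rewrite !Cnorm_mul.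
    pose proof (IH z h Hh). pose proof (peval_diff_bound l z h Hh).
    pose proof (Cnorm_nonneg z). pose proof (Cnorm_nonneg h).
    pose proof (pmajor_nonneg l (Cnorm z + 1) ltac:(lra)). pose proof (Cnorm_nonneg a).
    nra.
Qed.

Lemma peval_has_derivative : forall l z, C_has_derivative (peval l) z (peval (pderiv l) z).
Proof.
  intros l z. apply (has_derivative_of_quadratic_remainder _ _ _ (pmajor l (Cnorm z + 1))).
  - apply pmajor_nonneg. pose proof (Cnorm_nonneg z); lra.
  - intros h Hh. apply peval_remainder_bound; auto.
Qed.

Lemma peval_pderiv_compat : forall a b, (forall z, peval a z = peval b z) ->
  forall z, peval (pderiv a) z = peval (pderiv b) z.
Proof.
  intros a b H z. apply (derivative_unique (peval b) z).
  - apply (has_derivative_ext (peval a)); auto. apply peval_has_derivative.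
  - apply peval_has_derivative.
Qed.

Lemma peval_pderivn_mul_lin : forall s p l z,
  peval (pderivn (S s) (pmul_lin p l)) z =
  Cadd (Cmul (Csub z p) (peval (pderivn (S s) l) z)) (Cmul (INRc (S s)) (peval (pderivn s l) z)).
Proof.
  induction s as [|s IH]; intros p l z.
  - simpl. rewrite peval_pderiv_mul_lin. unfold INRc; simpl. Cring.
  - change (pderivn (S (S s)) (pmul_lin p l)) with (pderiv (pderivn (S s) (pmul_lin p l))).
    rewrite (peval_pderiv_compat _
               (padd (pmul_lin p (pderivn (S s) l)) (pscale (INRc (S s)) (pderivn s l)))).
    2: { intros w; rewrite IH, peval_add, peval_mul_lin, peval_scale; reflexivity. }
    rewrite peval_pderiv_add, peval_pderiv_mul_lin, peval_pderiv_scale. simpl pderivn.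
    unfold INRc. rewrite (S_INR (S s)). Cring.
Qed.

(** * Orders of vanishing *)

Definition vanishes (l : list Cplx) (p : Cplx) (m : nat) : Prop :=
  forall i, (i < m)%nat -> peval (pderivn i l) p = C0.

Lemma vanishes_mul_lin : forall l p m q, vanishes l p m -> vanishes (pmul_lin q l) p m.
Proof.
  intros l p m q H [|i] Hi.
  - simpl. rewrite peval_mul_lin. assert (E := H 0%nat ltac:(lia)); simpl in E; rewrite E. Cring.
  - rewrite peval_pderivn_mul_lin, (H (S i)), (H i) by lia. Cring.
Qed.

Lemma vanishes_mul_lin_same : forall l p m, vanishes l p m -> vanishes (pmul_lin p l) p (S m).
Proof.
  intros l p m H [|i] Hi.
  - simpl. rewrite peval_mul_lin. Cring.
  - rewrite peval_pderivn_mul_lin, (H i) by lia. Cring.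
Qed.

Lemma vanishes_mul_lin_pow_same : forall p m l, vanishes (pmul_lin_pow p m l) p m.
Proof.
  induction m as [|m IH]; intros l; [intros i Hi; lia|].
  simpl. apply vanishes_mul_lin_same; auto.
Qed.

Lemma vanishes_mul_lin_pow : forall l p m q k, vanishes l p m -> vanishes (pmul_lin_pow q k l) p m.
Proof. induction k; intros; simpl; auto. apply vanishes_mul_lin; auto. Qed.

Lemma peval_pderivn_mul_lin_pow : forall m l p,
  peval (pderivn m (pmul_lin_pow p m l)) p = Cmul (INRc (fact m)) (peval l p).
Proof.
  induction m as [|m IH]; intros l p.
  - unfold INRc; simpl. Cring.
  - simpl pmul_lin_pow. rewrite peval_pderivn_mul_lin, IH. unfold INRc.
    change (fact (S m)) with (S m * fact m)%nat. rewrite mult_INR. Cring.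
Qed.

Lemma peval_mul_lin_pow_nonzero : forall q m l z,
  z <> q -> peval l z <> C0 -> peval (pmul_lin_pow q m l) z <> C0.
Proof.
  induction m; intros l z Hzq Hl; simpl; auto. rewrite peval_mul_lin.
  apply Cmul_nonzero; auto. apply Csub_nonzero; auto.
Qed.

Lemma nth_padd : forall a b n, nth n (padd a b) C0 = Cadd (nth n a C0) (nth n b C0).
Proof.
  induction a as [|x a IH]; intros [|y b] n; simpl; try (destruct n; simpl; Cring).
  destruct n; simpl; auto.
Qed.

Lemma nth_pderiv : forall l n, nth n (pderiv l) C0 = Cmul (INRc (S n)) (nth (S n) l C0).
Proof.
  induction l as [|x l IH]; intros n.
  - simpl. destruct n; simpl; Cring.
  - simpl pderiv. rewrite nth_padd. destruct n.
    + simpl. unfold INRc; simpl. Cring.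
    + simpl nth at 2. rewrite IH. simpl nth. unfold INRc. rewrite (S_INR (S n)). Cring.
Qed.

Definition degree_below (l : list Cplx) (m : nat) : Prop :=
  forall i, (m <= i)%nat -> nth i l C0 = C0.

Lemma degree_below_length : forall l, degree_below l (length l).
Proof. intros l i Hi. apply nth_overflow. auto. Qed.

Lemma degree_below_pderivn : forall k l m, degree_below l (k + m) -> degree_below (pderivn k l) m.
Proof.
  induction k as [|k IH]; intros l m H; simpl; auto.
  intros i Hi. rewrite nth_pderiv, (IH l (S m)); [Cring | | lia].
  replace (k + S m)%nat with (S k + m)%nat by lia. auto.
Qed.

Lemma peval_degree_below_0 : forall l, degree_below l 0 -> forall z, peval l z = C0.
Proof.
  induction l as [|x l IH]; intros H z; simpl; auto.
  assert (Hx := H 0%nat ltac:(lia)); simpl in Hx. rewrite Hx, IH; [Cring|].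
  intros i Hi. apply (H (S i)). lia.
Qed.

Lemma peval_snoc : forall l x z,
  peval (l ++ [x]) z = Cadd (peval l z) (Cmul x (Cpow z (length l))).
Proof. induction l as [|b l IH]; intros; simpl; [Cring|]. rewrite IH. Cring. Qed.

Lemma peval_coefficients : forall a N z,
  peval (map a (seq 0 (S N))) z = Csum (fun k => Cmul (a k) (Cpow z k)) N.
Proof.
  induction N as [|N IH]; intros z.
  - simpl. Cring.
  - rewrite (seq_S (S N)), map_app. simpl (map a [_]).
    rewrite peval_snoc, IH, length_map, length_seq. reflexivity.
Qed.

Lemma polynomial_tower_vanishes : forall f D N a,
  derivative_tower f D -> (forall z, f z = Csum (fun k => Cmul (a k) (Cpow z k)) N) ->
  forall z, D (S N) z = C0.
Proof.
  intros f D N a [HD0 HDS] Hf.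
  set (L := map a (seq 0 (S N))).
  assert (HDL : forall s z, D s z = peval (pderivn s L) z).
  { induction s as [|s IH]; intros z.
    - rewrite HD0, Hf. symmetry; apply peval_coefficients.
    - apply (derivative_unique (D s) z); [apply HDS|].
      apply (has_derivative_ext (peval (pderivn s L))); [intros w; rewrite IH; auto|].
      apply peval_has_derivative. }
  intros z. rewrite HDL. apply peval_degree_below_0, degree_below_pderivn.
  rewrite Nat.add_0_r. pose proof (degree_below_length L) as HL.
  unfold L in *. rewrite length_map, length_seq in HL. exact HL.
Qed.

Fixpoint csum (f : nat -> Cplx) (n : nat) : Cplx :=
  match n with O => C0 | S n => Cadd (csum f n) (f n) end.
Fixpoint rsum (f : nat -> R) (n : nat) : R :=
  match n with O => 0 | S n => rsum f n + f n end.

Lemma csum_ext : forall f g n, (forall j, (j < n)%nat -> f j = g j) -> csum f n = csum g n.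
Proof.
  induction n as [|n IH]; intros H; simpl; auto.
  rewrite IH by (intros; apply H; lia). rewrite H by lia. reflexivity.
Qed.

Lemma csum_eventually_constant : forall f m n,
  (forall j, (m <= j)%nat -> f j = C0) -> (m <= n)%nat -> csum f n = csum f m.
Proof. intros f m n H Hmn. induction Hmn; auto. simpl. rewrite IHHmn, H by lia. Cring. Qed.

Lemma csum_remainder : forall f g k h n,
  Csub (Csub (csum f n) (csum g n)) (Cmul (csum k n) h) =
  csum (fun j => Csub (Csub (f j) (g j)) (Cmul (k j) h)) n.
Proof. induction n as [|n IH]; simpl; [Cring|]. rewrite <- IH. Cring. Qed.

Lemma csum_norm : forall f n, Cnorm (csum f n) <= rsum (fun j => Cnorm (f j)) n.
Proof.
  induction n as [|n IH]; simpl; [rewrite Cnorm_C0; lra|].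
  eapply Rle_trans; [apply Cnorm_triangle|]. lra.
Qed.

Lemma Re_csum : forall f n, Re (csum f n) = rsum (fun j => Re (f j)) n.
Proof. induction n as [|n IH]; simpl; auto. rewrite IH; auto. Qed.

Lemma Im_csum : forall f n, Im (csum f n) = rsum (fun j => Im (f j)) n.
Proof. induction n as [|n IH]; simpl; auto. rewrite IH; auto. Qed.

Lemma rsum_le : forall f g n, (forall j, (j < n)%nat -> f j <= g j) -> rsum f n <= rsum g n.
Proof.
  induction n as [|n IH]; intros H; simpl; [lra|].
  pose proof (H n ltac:(lia)). pose proof (IH ltac:(intros; apply H; lia)). lra.
Qed.

Lemma rsum_nonneg : forall f n, (forall j, 0 <= f j) -> 0 <= rsum f n.
Proof. induction n as [|n IH]; intros H; simpl; [lra|]. pose proof (H n). pose proof (IH H). lra. Qed.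

Lemma rsum_term_le : forall f n i, (forall j, 0 <= f j) -> (i < n)%nat -> f i <= rsum f n.
Proof.
  induction n as [|n IH]; intros i Hf Hi; [lia|]. simpl. destruct (Nat.eq_dec i n).
  - subst. pose proof (rsum_nonneg f n Hf). lra.
  - pose proof (IH i Hf ltac:(lia)). pose proof (Hf n). lra.
Qed.

Lemma rsum_scal : forall c f n, rsum (fun j => c * f j) n = c * rsum f n.
Proof. induction n as [|n IH]; simpl; [ring|]. rewrite IH. ring. Qed.

Lemma rsum_abs : forall f n, Rabs (rsum f n) <= rsum (fun j => Rabs (f j)) n.
Proof.
  induction n as [|n IH]; simpl; [rewrite Rabs_R0; lra|].
  eapply Rle_trans; [apply Rabs_triang|]. lra.
Qed.

Lemma rsum_split : forall f m d, rsum f (m + d) = rsum f m + rsum (fun j => f (m + j)%nat) d.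
Proof.
  induction d as [|d IH]; simpl; [rewrite Nat.add_0_r; lra|].
  rewrite Nat.add_succ_r; simpl. rewrite IH; lra.
Qed.

Lemma rsum_geometric_tail : forall m d, rsum (fun j => (/2)^(m + j)) d <= 2 * (/2)^m.
Proof.
  intros m d.
  assert (Hsum : rsum (fun j => (/2)^(m + j)) d = 2 * (/2)^m - 2 * (/2)^(m + d)).
  { induction d as [|d IH]; simpl; [rewrite Nat.add_0_r; ring|].
    rewrite IH, Nat.add_succ_r. simpl. field. }
  rewrite Hsum. pose proof (pow_le (/2) (m + d) ltac:(lra)). lra.
Qed.

Lemma rsum_dominated_bound : forall a J, (forall j, 0 <= a j) ->
  (forall j, (J <= j)%nat -> a j <= (/2)^j) -> forall n, rsum a n <= rsum a J + 2.
Proof.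
  intros a J Hp Hb n. destruct (le_lt_dec n J) as [HnJ|HJn].
  - replace J with (n + (J - n))%nat by lia. rewrite rsum_split.
    pose proof (rsum_nonneg (fun j => a (n + j)%nat) (J - n) ltac:(intros; apply Hp)). lra.
  - replace n with (J + (n - J))%nat by lia. rewrite rsum_split.
    assert (rsum (fun j => a (J + j)%nat) (n - J) <= rsum (fun j => (/2)^(J + j)) (n - J)).
    { apply rsum_le; intros; apply Hb; lia. }
    pose proof (rsum_geometric_tail J (n - J)).
    assert ((/2)^J <= 1) by (rewrite <- (pow1 J); apply pow_incr; lra). lra.
Qed.

Lemma rsum_dominated_cv : forall (x : nat -> R) J,
  (forall j, (J <= j)%nat -> Rabs (x j) <= (/2)^j) -> exists L, Un_cv (rsum x) L.
Proof.
  intros x J Hx. destruct (R_complete (rsum x)) as [L HL]; [|exists L; auto].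
  intros eps He.
  destruct (pow_lt_1_zero (/2) ltac:(rewrite Rabs_right; lra) (eps / 2) ltac:(lra)) as [N0 HN0].
  exists (max J N0).
  assert (Htail : forall a b, (max J N0 <= a)%nat -> (a <= b)%nat ->
            Rdist (rsum x b) (rsum x a) < eps).
  { intros a b Ha Hab. replace b with (a + (b - a))%nat by lia. rewrite rsum_split. unfold Rdist.
    replace (rsum x a + rsum (fun j => x (a + j)%nat) (b - a) - rsum x a)
      with (rsum (fun j => x (a + j)%nat) (b - a)) by ring.
    eapply Rle_lt_trans; [apply rsum_abs|].
    eapply Rle_lt_trans; [apply (rsum_le _ (fun j => (/2)^(a + j))); intros; apply Hx; lia|].
    eapply Rle_lt_trans; [apply rsum_geometric_tail|].
    specialize (HN0 a ltac:(lia)). rewrite Rabs_right in HN0; [lra|].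
    apply Rle_ge, pow_le; lra. }
  intros n m Hn Hm. destruct (le_lt_dec m n).
  - apply Htail; lia.
  - rewrite Rdist_sym. apply Htail; lia.
Qed.

Definition Ccv (u : nat -> Cplx) (L : Cplx) : Prop :=
  Un_cv (fun n => Re (u n)) (Re L) /\ Un_cv (fun n => Im (u n)) (Im L).

(* The limit of a sequence, chosen by Hilbert's ε (meaningful when it converges). *)
Definition Rlim (v : nat -> R) : R := epsilon (inhabits 0) (fun l => Un_cv v l).
Definition Climit (u : nat -> Cplx) : Cplx :=
  mkC (Rlim (fun n => Re (u n))) (Rlim (fun n => Im (u n))).

Lemma Climit_spec : forall u L, Ccv u L -> Climit u = L.
Proof.
  assert (Rlim_spec : forall v l, Un_cv v l -> Rlim v = l).
  { intros v l H. unfold Rlim. apply (UL_sequence v); auto. apply epsilon_spec. exists l; auto. }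
  intros u L [H1 H2]. unfold Climit. rewrite (Rlim_spec _ _ H1), (Rlim_spec _ _ H2).
  destruct L; auto.
Qed.

Lemma Un_cv_ext : forall u v l, (forall n, u n = v n) -> Un_cv u l -> Un_cv v l.
Proof. intros u v l E H eps He. destruct (H eps He) as [N HN]. exists N. intros. rewrite <- E; auto. Qed.

Lemma Ccv_ext : forall u v L, (forall n, u n = v n) -> Ccv u L -> Ccv v L.
Proof. intros u v L E [H1 H2]. split; eapply Un_cv_ext; eauto; intros; simpl; rewrite E; auto. Qed.

Lemma Ccv_sub : forall u v a b, Ccv u a -> Ccv v b -> Ccv (fun n => Csub (u n) (v n)) (Csub a b).
Proof.
  intros u v a b [H1 H2] [H3 H4]. split; simpl.
  - apply (Un_cv_ext (fun n => Re (u n) - Re (v n))); [intros; simpl; ring|]. now apply CV_minus.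
  - apply (Un_cv_ext (fun n => Im (u n) - Im (v n))); [intros; simpl; ring|]. now apply CV_minus.
Qed.

Lemma Ccv_mul_const : forall u a h, Ccv u a -> Ccv (fun n => Cmul (u n) h) (Cmul a h).
Proof.
  assert (Hconst : forall c, Un_cv (fun _ => c) c).
  { intros c eps He. exists 0%nat. intros. unfold Rdist. rewrite Rminus_diag, Rabs_R0; lra. }
  intros u a h [H1 H2]. split; simpl.
  - apply (Un_cv_ext (fun n => Re (u n) * Re h - Im (u n) * Im h)); [intros; simpl; ring|].
    apply CV_minus; apply CV_mult; auto.
  - apply (Un_cv_ext (fun n => Re (u n) * Im h + Im (u n) * Re h)); [intros; simpl; ring|].
    apply CV_plus; apply CV_mult; auto.
Qed.

Lemma Ccv_eventually_constant : forall u c m, (forall n, (m <= n)%nat -> u n = c) -> Ccv u c.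
Proof.
  intros u c m H. split; intros eps He; exists m; intros n Hn; rewrite H by lia;
  unfold Rdist; rewrite Rminus_diag, Rabs_R0; lra.
Qed.

Lemma Ccv_norm_le : forall u L B, Ccv u L -> (forall n, Cnorm (u n) <= B) -> Cnorm L <= B.
Proof.
  intros u L B [H1 H2] Hb. apply Rnot_lt_le. intro Hlt.
  set (eps := (Cnorm L - B) / 2).
  destruct (H1 eps ltac:(unfold eps; lra)) as [N1 P1].
  destruct (H2 eps ltac:(unfold eps; lra)) as [N2 P2].
  specialize (P1 (max N1 N2) ltac:(lia)). specialize (P2 (max N1 N2) ltac:(lia)).
  specialize (Hb (max N1 N2)). set (w := u (max N1 N2)) in *. unfold Rdist in *.
  pose proof (Cnorm_le_sum (Csub L w)) as Hsum. simpl in Hsum.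
  replace (Re L + - Re w) with (- (Re w - Re L)) in Hsum by ring.
  replace (Im L + - Im w) with (- (Im w - Im L)) in Hsum by ring.
  rewrite !Rabs_Ropp in Hsum.
  pose proof (Cnorm_triangle w (Csub L w)) as Htri.
  replace (Cadd w (Csub L w)) with L in Htri by Cring.
  unfold eps in *. lra.
Qed.

Lemma csum_dominated_cv : forall g J,
  (forall j, (J <= j)%nat -> Cnorm (g j) <= (/2)^j) -> exists L, Ccv (csum g) L.
Proof.
  intros g J H.
  destruct (rsum_dominated_cv (fun j => Re (g j)) J) as [L1 HL1].
  { intros; eapply Rle_trans; [apply Cnorm_Re|]; auto. }
  destruct (rsum_dominated_cv (fun j => Im (g j)) J) as [L2 HL2].
  { intros; eapply Rle_trans; [apply Cnorm_Im|]; auto. }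
  exists (mkC L1 L2). split; simpl.
  - apply (Un_cv_ext (rsum (fun j => Re (g j)))); auto. intros; rewrite Re_csum; auto.
  - apply (Un_cv_ext (rsum (fun j => Im (g j)))); auto. intros; rewrite Im_csum; auto.
Qed.

Lemma nat_above : forall x, exists N : nat, x <= INR N.
Proof. intros x. destruct (INR_archimed 1 x ltac:(lra)) as [n Hn]. exists n. lra. Qed.

(** * Term-by-term differentiation of dominated series of polynomials *)

Section DominatedSeries.

Variables (P : nat -> list Cplx) (c : nat -> Cplx).

Hypothesis dominated : forall s r, 0 <= r -> exists J, forall j, (J <= j)%nat ->
  Cnorm (c j) * pmajor (pderivn s (P j)) r <= (/2)^j.

Definition series_partial (s : nat) (z : Cplx) (n : nat) : Cplx :=
  csum (fun j => Cmul (c j) (peval (pderivn s (P j)) z)) n.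

Definition series (s : nat) (z : Cplx) : Cplx := Climit (series_partial s z).

Lemma series_cv : forall s z, Ccv (series_partial s z) (series s z).
Proof.
  intros s z. destruct (dominated s (Cnorm z) (Cnorm_nonneg z)) as [J HJ].
  destruct (csum_dominated_cv (fun j => Cmul (c j) (peval (pderivn s (P j)) z)) J) as [L HL].
  { intros j Hj. rewrite Cnorm_mul. eapply Rle_trans; [|apply (HJ j Hj)].
    apply Rmult_le_compat_l; [apply Cnorm_nonneg | apply peval_bound]. }
  unfold series. rewrite (Climit_spec _ L); auto.
Qed.

Lemma series_finite : forall s z m,
  (forall j, (m <= j)%nat -> Cmul (c j) (peval (pderivn s (P j)) z) = C0) ->
  series s z = series_partial s z m.
Proof.
  intros s z m Hzero. unfold series. apply Climit_spec.
  apply (Ccv_eventually_constant _ _ m). intros n Hn.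
  apply csum_eventually_constant; auto.
Qed.

(* The derivative series is the derivative of the series: its first-order remainder
   is the sum of the termwise remainders, each quadratic in h with summable constants. *)
Lemma series_derivative : forall s z, C_has_derivative (series s) z (series (S s) z).
Proof.
  intros s z. set (r := Cnorm z + 1).
  assert (Hr : 0 <= r) by (unfold r; pose proof (Cnorm_nonneg z); lra).
  destruct (dominated s r Hr) as [J HJ].
  set (a := fun j => Cnorm (c j) * pmajor (pderivn s (P j)) r).
  assert (Ha : forall j, 0 <= a j).
  { intros j; unfold a. apply Rmult_le_pos; [apply Cnorm_nonneg | apply pmajor_nonneg; auto]. }
  set (M := rsum a J + 2).
  assert (HM : 0 <= M) by (unfold M; pose proof (rsum_nonneg a J Ha); lra).
  apply (has_derivative_of_quadratic_remainder _ _ _ M HM). intros h Hh.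
  set (R_term := fun j => Cmul (c j) (Csub (Csub (peval (pderivn s (P j)) (Cadd z h))
                                               (peval (pderivn s (P j)) z))
                                         (Cmul (peval (pderivn (S s) (P j)) z) h))).
  apply (Ccv_norm_le (csum R_term)).
  - eapply Ccv_ext; [|apply Ccv_sub; [apply Ccv_sub | apply Ccv_mul_const]; apply series_cv].
    intros n. unfold series_partial. rewrite csum_remainder. apply csum_ext.
    intros j _. unfold R_term. simpl pderivn. Cring.
  - intros n. eapply Rle_trans; [apply csum_norm|].
    eapply Rle_trans; [apply (rsum_le _ (fun j => Cnorm h * Cnorm h * a j))|].
    + intros j _. unfold R_term, a. rewrite Cnorm_mul.
      pose proof (peval_remainder_bound (pderivn s (P j)) z h Hh) as Hrem. fold r in Hrem.
      replace (Cnorm h * Cnorm h * (Cnorm (c j) * pmajor (pderivn s (P j)) r))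
        with (Cnorm (c j) * (Cnorm h * Cnorm h * pmajor (pderivn s (P j)) r)) by ring.
      apply Rmult_le_compat_l; [apply Cnorm_nonneg | exact Hrem].
    + rewrite rsum_scal. apply Rmult_le_compat_l; [nra|].
      apply (rsum_dominated_bound a J Ha HJ).
Qed.

End DominatedSeries.

(** * An enumeration of ℕ × ℕ *)

(* Walk the anti-diagonals s + n = d, with s increasing along each of them. *)
Definition pair_next (p : nat * nat) : nat * nat :=
  match p with (s, O) => (O, S s) | (s, S n) => (S s, n) end.

Fixpoint pair_enum (k : nat) : nat * nat :=
  match k with O => (O, O) | S k => pair_next (pair_enum k) end.

Lemma pair_enum_cantor : forall k,
  let '(s, n) := pair_enum k in ((s + n) * (s + n + 1) + 2 * s = 2 * k)%nat.
Proof.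
  induction k as [|k IH]; simpl; auto.
  destruct (pair_enum k) as [s [|n]]; simpl in *; nia.
Qed.

Lemma pair_enum_surjective : forall s n, exists k, pair_enum k = (s, n).
Proof.
  assert (Hdiag : forall d s, (s <= d)%nat -> exists k, pair_enum k = (s, d - s)%nat).
  { induction d as [|d IHd]; intros s Hs.
    - exists 0%nat. replace s with 0%nat by lia. reflexivity.
    - induction s as [|s IHs].
      + destruct (IHd d ltac:(lia)) as [k Hk]. exists (S k). simpl. rewrite Hk.
        replace (d - d)%nat with 0%nat by lia. reflexivity.
      + destruct (IHs ltac:(lia)) as [k Hk]. exists (S k). simpl. rewrite Hk.
        replace (S d - s)%nat with (S (S d - S s)) by lia. reflexivity. }
  intros s n. destruct (Hdiag (s + n)%nat s ltac:(lia)) as [k Hk]. exists k.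
  rewrite Hk. f_equal; lia.
Qed.

Lemma pair_enum_fst_increasing : forall j k, (j < k)%nat ->
  snd (pair_enum j) = snd (pair_enum k) -> (fst (pair_enum j) < fst (pair_enum k))%nat.
Proof.
  intros j k Hjk. pose proof (pair_enum_cantor j). pose proof (pair_enum_cantor k).
  destruct (pair_enum j) as [a n]; destruct (pair_enum k) as [b m]; simpl in *. intros <-.
  destruct (le_lt_dec b a); auto.
  assert ((b + n) * (b + n + 1) <= (a + n) * (a + n + 1))%nat by (apply Nat.mul_le_mono; lia).
  lia.
Qed.

Lemma least_witness : forall (P : nat -> Prop) n, P n ->
  exists m, P m /\ forall m', (m' < m)%nat -> ~ P m'.
Proof.
  intros P n. induction n as [n IH] using (well_founded_induction lt_wf). intros Hn.
  destruct (classic (exists m', (m' < n)%nat /\ P m')) as [[m' [H1 H2]]|H].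
  - apply (IH m' H1 H2).
  - exists n; split; auto. intros m' Hm' Pm'. apply H; eauto.
Qed.

(** * The inductive construction *)

Section Construction.

Variable e : nat -> Cplx.
Variable T : Cplx -> Prop.

(* The points 0, e 0, e 1, … ; the point 0 witnesses transcendence. *)
Definition point (n : nat) : Cplx := match n with O => C0 | S n => e n end.

(* Condition k asks that the order_k-th derivative at point (index_k) lie in T ∖ {0}. *)
Definition order (k : nat) : nat := fst (pair_enum k).
Definition index (k : nat) : nat := snd (pair_enum k).
Definition cpoint (k : nat) : Cplx := point (index k).

Definition redundant (k : nat) : Prop :=
  exists n, (n < index k)%nat /\ point n = point (index k).

Fixpoint separator (k j : nat) : list Cplx :=
  match j with
  | O => [C1]
  | S j' => if excluded_middle_informative (cpoint j' = cpoint k) then separator k j'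
            else pmul_lin_pow (cpoint j') (S (order j')) (separator k j')
  end.

Definition basis (k : nat) : list Cplx := pmul_lin_pow (cpoint k) (order k) (separator k k).

(* The value Q_k^(order k)(cpoint k) by which the coefficient c_k acts on condition k. *)
Definition pivot (k : nat) : Cplx := peval (pderivn (order k) (basis k)) (cpoint k).

(* Admissible size of c_k: it keeps |c_k| pmajor(Q_k^(i))(k) ≤ 2^{-k} for all i ≤ k. *)
Definition basis_size (k : nat) : R :=
  rsum (fun i => pmajor (pderivn i (basis k)) (INR k)) (S k).
Definition radius (k : nat) : R := (/2)^k / (1 + basis_size k).

Definition target (t : Cplx) : Prop := T t /\ t <> C0.

Definition prior_value (g : nat -> Cplx) (k : nat) : Cplx :=
  csum (fun j => Cmul (g j) (peval (pderivn (order k) (basis j)) (cpoint k))) k.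

(* Choose c_k = (t - prior value) / pivot for a target value t close to the prior value. *)
Definition choose_coef (g : nat -> Cplx) (k : nat) : Cplx :=
  if excluded_middle_informative (redundant k) then C0 else
  Cmul (Csub (epsilon (inhabits C0)
                (fun t => target t /\
                          Cnorm (Csub t (prior_value g k)) < Cnorm (pivot k) * radius k))
             (prior_value g k))
       (Cinv (pivot k)).

(* coef_prefix k holds the coefficients c_0, …, c_{k-1}. *)
Fixpoint coef_prefix (k : nat) : nat -> Cplx :=
  match k with
  | O => fun _ => C0
  | S k => fun j => if Nat.ltb j k then coef_prefix k j else choose_coef (coef_prefix k) k
  end.

Definition coef (j : nat) : Cplx := coef_prefix (S j) j.

Lemma coef_prefix_coef : forall k j, (j < k)%nat -> coef_prefix k j = coef j.
Proof.
  induction k as [|k IH]; intros j Hj; [lia|]. simpl.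
  destruct (Nat.ltb_spec j k); [apply IH; auto|].
  assert (j = k) by lia. subst. unfold coef. simpl. rewrite Nat.ltb_irrefl. reflexivity.
Qed.

Lemma coef_choose : forall k, coef k = choose_coef coef k.
Proof.
  intros k. unfold coef at 1. simpl. rewrite Nat.ltb_irrefl. unfold choose_coef.
  replace (prior_value (coef_prefix k) k) with (prior_value coef k); [reflexivity|].
  apply csum_ext. intros; rewrite coef_prefix_coef; auto.
Qed.

Lemma coef_redundant : forall k, redundant k -> coef k = C0.
Proof.
  intros k Hk. rewrite coef_choose. unfold choose_coef.
  destruct (excluded_middle_informative (redundant k)); [reflexivity | contradiction].
Qed.

Lemma separator_nonzero : forall k j, peval (separator k j) (cpoint k) <> C0.
Proof.
  induction j as [|j IH]; simpl.
  - intro H. assert (Hre : Re (Cadd C1 (Cmul (cpoint k) C0)) = Re C0) by (rewrite H; auto).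
    unfold Cadd, Cmul, C1, C0 in Hre; simpl in Hre. lra.
  - destruct (excluded_middle_informative (cpoint j = cpoint k)) as [_|Hne]; auto.
    exact (peval_mul_lin_pow_nonzero (cpoint j) (S (order j)) _ _ (not_eq_sym Hne) IH).
Qed.

Lemma pivot_nonzero : forall k, pivot k <> C0.
Proof.
  intros k. unfold pivot, basis. rewrite peval_pderivn_mul_lin_pow.
  apply Cmul_nonzero; [apply INRc_nonzero, lt_O_fact | apply separator_nonzero].
Qed.

Lemma separator_vanishes : forall k j i, (i < j)%nat -> cpoint i <> cpoint k ->
  vanishes (separator k j) (cpoint i) (S (order i)).
Proof.
  induction j as [|j IH]; intros i Hi Hne; [lia|]. cbn [separator].
  destruct (excluded_middle_informative (cpoint j = cpoint k)) as [E|E];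
    destruct (Nat.eq_dec i j) as [->|Hij].
  - contradiction.
  - apply IH; auto; lia.
  - apply vanishes_mul_lin_pow_same.
  - apply vanishes_mul_lin_pow, IH; auto; lia.
Qed.

Lemma basis_vanishes_other : forall i j, (i < j)%nat -> cpoint i <> cpoint j ->
  vanishes (basis j) (cpoint i) (S (order i)).
Proof. intros. unfold basis. apply vanishes_mul_lin_pow, separator_vanishes; auto. Qed.

Lemma basis_vanishes_self : forall j, vanishes (basis j) (cpoint j) (order j).
Proof. intros. unfold basis. apply vanishes_mul_lin_pow_same. Qed.

Lemma later_term_vanishes : forall k j, ~ redundant k -> (k < j)%nat ->
  Cmul (coef j) (peval (pderivn (order k) (basis j)) (cpoint k)) = C0.
Proof.
  intros k j Hk Hkj.
  destruct (classic (redundant j)) as [Hj|Hj]; [rewrite coef_redundant by auto; Cring|].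
  destruct (classic (cpoint k = cpoint j)) as [E|E].
  - assert (Hidx : index k = index j).
    { unfold cpoint in E. destruct (lt_eq_lt_dec (index k) (index j)) as [[l|l]|l]; auto.
      - exfalso; apply Hj. exists (index k); split; auto.
      - exfalso; apply Hk. exists (index j); split; auto. }
    pose proof (pair_enum_fst_increasing k j Hkj Hidx) as Hord.
    rewrite E, (basis_vanishes_self j (order k) Hord). Cring.
  - rewrite (basis_vanishes_other k j Hkj E (order k)) by lia. Cring.
Qed.

Hypothesis T_dense : dense_set T.

Lemma target_dense : forall z eps, 0 < eps -> exists t, target t /\ Cnorm (Csub t z) < eps.
Proof.
  intros z eps He. destruct (classic (z = C0)) as [->|Hz].
  - destruct (T_dense (mkC (eps / 2) 0) (eps / 2) ltac:(lra)) as [t [Tt Ht]].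
    assert (Hshift : Csub t C0 = Cadd (Csub t (mkC (eps / 2) 0)) (mkC (eps / 2) 0)) by Cring.
    exists t. split; [split; auto|].
    + intros ->. replace (Csub C0 (mkC (eps / 2) 0)) with (mkC (- (eps / 2)) 0) in Ht by Cring.
      rewrite Cnorm_real, Rabs_left in Ht; lra.
    + rewrite Hshift. eapply Rle_lt_trans; [apply Cnorm_triangle|].
      rewrite Cnorm_real, Rabs_right; lra.
  - pose proof (Cnorm_pos z Hz).
    destruct (T_dense z (Rmin eps (Cnorm z)) ltac:(apply Rmin_pos; lra)) as [t [Tt Ht]].
    pose proof (Rmin_l eps (Cnorm z)). pose proof (Rmin_r eps (Cnorm z)).
    exists t. split; [split; auto | lra].
    intros ->. replace (Csub C0 z) with (Copp z) in Ht by Cring. rewrite Cnorm_opp in Ht. lra.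
Qed.

Lemma radius_pos : forall k, 0 < radius k.
Proof.
  intros k. unfold radius, basis_size. apply Rdiv_lt_0_compat; [apply pow_lt; lra|].
  pose proof (rsum_nonneg (fun i => pmajor (pderivn i (basis k)) (INR k)) (S k)
                ltac:(intros; apply pmajor_nonneg, pos_INR)). lra.
Qed.

Lemma coef_spec : forall k, ~ redundant k ->
  target (Cadd (prior_value coef k) (Cmul (coef k) (pivot k))) /\ Cnorm (coef k) < radius k.
Proof.
  intros k Hk. pose proof (Cnorm_pos _ (pivot_nonzero k)) as Hq.
  set (V := prior_value coef k).
  set (Good := fun t => target t /\ Cnorm (Csub t V) < Cnorm (pivot k) * radius k).
  assert (HGood : Good (epsilon (inhabits C0) Good)).
  { apply epsilon_spec, target_dense. pose proof (radius_pos k). nra. }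
  set (t := epsilon (inhabits C0) Good) in *. destruct HGood as [Ht Hclose].
  assert (Hcq : Cmul (coef k) (pivot k) = Csub t V).
  { rewrite coef_choose. unfold choose_coef.
    destruct (excluded_middle_informative (redundant k)); [contradiction|]. fold V Good t.
    pose proof (Cinv_l _ (pivot_nonzero k)) as Hinv.
    replace (Cmul (Cmul (Csub t V) (Cinv (pivot k))) (pivot k))
      with (Cmul (Csub t V) (Cmul (Cinv (pivot k)) (pivot k))) by Cring.
    rewrite Hinv. Cring. }
  split.
  - rewrite Hcq. replace (Cadd V (Csub t V)) with t by Cring. exact Ht.
  - rewrite <- Hcq, Cnorm_mul in Hclose. pose proof (Cnorm_nonneg (coef k)). nra.
Qed.

Lemma coef_bound : forall k, Cnorm (coef k) <= radius k.
Proof.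
  intros k. destruct (classic (redundant k)) as [Hk|Hk].
  - rewrite coef_redundant, Cnorm_C0 by auto. apply Rlt_le, radius_pos.
  - apply Rlt_le, coef_spec; auto.
Qed.

Lemma coef_dominated : forall s r, 0 <= r -> exists J, forall j, (J <= j)%nat ->
  Cnorm (coef j) * pmajor (pderivn s (basis j)) r <= (/2)^j.
Proof.
  intros s r Hr. destruct (nat_above r) as [N HN]. exists (max s N). intros j Hj.
  assert (Hmaj : pmajor (pderivn s (basis j)) r <= basis_size j).
  { eapply Rle_trans; [apply (pmajor_mono _ r (INR j)); auto|].
    - eapply Rle_trans; [apply HN | apply le_INR; lia].
    - unfold basis_size. apply (rsum_term_le (fun i => pmajor (pderivn i (basis j)) (INR j)));
        [intros; apply pmajor_nonneg, pos_INR | lia]. }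
  assert (Hmaj0 : 0 <= pmajor (pderivn s (basis j)) r) by (apply pmajor_nonneg; auto).
  pose proof (coef_bound j) as Hc. pose proof (Cnorm_nonneg (coef j)).
  assert (Hcs : Cnorm (coef j) * (1 + basis_size j) <= (/2)^j).
  { unfold radius in Hc. apply (Rmult_le_compat_r (1 + basis_size j)) in Hc; [|lra].
    unfold Rdiv in Hc. rewrite Rmult_assoc, Rinv_l in Hc; lra. }
  nra.
Qed.

Definition interpolant (s : nat) (z : Cplx) : Cplx := series basis coef s z.

Lemma interpolant_derivative : forall s z,
  C_has_derivative (interpolant s) z (interpolant (S s) z).
Proof. intros. apply series_derivative, coef_dominated. Qed.

(* Every non-redundant condition holds: later terms do not contribute. *)
Lemma interpolant_condition : forall k, ~ redundant k -> target (interpolant (order k) (cpoint k)).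
Proof.
  intros k Hk. unfold interpolant.
  rewrite (series_finite _ _ _ _ (S k)) by (intros j Hj; apply later_term_vanishes; auto; lia).
  apply coef_spec; auto.
Qed.

(* Hence every condition holds: each point has a least index, whose conditions are
   non-redundant. *)
Lemma interpolant_target : forall s n, target (interpolant s (point n)).
Proof.
  intros s n.
  destruct (least_witness (fun m => point m = point n) n eq_refl) as [m [Hm Hmin]].
  destruct (pair_enum_surjective s m) as [k Hk].
  assert (Hs : order k = s) by (unfold order; rewrite Hk; auto).
  assert (Hn : index k = m) by (unfold index; rewrite Hk; auto).
  assert (Hr : ~ redundant k).
  { intros [n' [H1 H2]]. rewrite Hn in *. apply (Hmin n'); congruence. }
  pose proof (interpolant_condition k Hr) as Hcond.
  unfold cpoint in Hcond. rewrite Hs, Hn, Hm in Hcond. exact Hcond.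
Qed.

End Construction.

Theorem corollary1 :
  forall (Sigma T : Cplx -> Prop),
    countable_set Sigma -> dense_set T ->
    exists (f : Cplx -> Cplx) (D : nat -> Cplx -> Cplx),
      transcendental_entire f /\ derivative_tower f D /\
      forall (s : nat) (z : Cplx), Sigma z -> T (D s z).
Proof.
  intros Sigma T [e He] HT.
  exists (interpolant e T 0), (interpolant e T).
  assert (Htower : derivative_tower (interpolant e T 0) (interpolant e T)).
  { split; [reflexivity|]. intros; apply interpolant_derivative; auto. }
  split; [split|split; [exact Htower|]].
  - intros z. exists (interpolant e T 1 z). apply interpolant_derivative; auto.
  - (* A polynomial of degree N would have a vanishing (N+1)-st derivative at 0. *)
    intros [N [a Ha]].
    destruct (interpolant_target e T HT (S N) 0) as [_ Hnonzero].
    apply Hnonzero, (polynomial_tower_vanishes _ _ N a Htower Ha).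
  - intros s z Hz. destruct (He z Hz) as [n <-].
    exact (proj1 (interpolant_target e T HT s (S n))).
Qed.
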